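(* Let $\delta>0$ and $E\in\mathcal T_\delta$. Then there are constants $0<C_1<C_2$ such that for all $0<\epsilon<\delta$, $$\frac{C_1}{|m^+(E+i\epsilon)|}<\frac{\|\boldsymbol u_1\|_{L_\epsilon}}{\|\boldsymbol u_2\|_{L_\epsilon}}<\frac{C_2}{|m^+(E+i\epsilon)|}.$$
   Context: $J=\begin{pmatrix}1&0\\0&0\end{pmatrix}$, $V:\mathbb Z\to M(2,\mathbb C)$ bounded with self-adjoint values $V(n)=(V_{ij}(n))$, and $(\mathcal S\boldsymbol u)(n)=J\boldsymbol u(n+1)+J\boldsymbol u(n-1)+V(n)\boldsymbol u(n)$ on $\ell^2(\mathbb Z,\mathbb C^2)$; write $\boldsymbol u(n)=(a(n),b(n))^{\mathsf T}$. $\mathcal T_\delta=\{x\in\mathbb R:\operatorname{dist}(x,\{V_{22}(n):n\in\mathbb Z\})\ge\delta\}$. For $\operatorname{Im}z>0$ let $\boldsymbol u_z^+$ be the (unique up to scaling) nonzero solution of $\mathcal S\boldsymbol u=z\boldsymbol u$ with $\sum_{n\ge0}\|\boldsymbol u_z^+(n)\|^2<\infty$ and put $m^+(z)=-a_z^+(1)/a_z^+(0)$. For $E\in\mathcal T_\delta$, let $\boldsymbol u_1,\boldsymbol u_2$ be the solutions of $\mathcal S\boldsymbol u=E\boldsymbol u$ with $a_1(1)=1,a_1(0)=0$, $a_2(1)=0,a_2(0)=1$ (for such $E$ every solution satisfies $b(n)=\frac{V_{21}(n)}{E-V_{22}(n)}a(n)$). For $L>1$, $\|\boldsymbol u\|_L=\big(\sum_{n=1}^{\lfloor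 L\rfloor}\|\boldsymbol u(n)\|^2+(L-\lfloor L\rfloor)\|\boldsymbol u(\lfloor L\rfloor+1)\|^2\big)^{1/2}$, and for $\epsilon>0$, $L_\epsilon\in(1,\infty)$ is the unique $L$ with $\|\boldsymbol u_1\|_L\|\boldsymbol u_2\|_L=\frac1{4\epsilon}$. *)

From Stdlib Require Import Reals ZArith.
From Coquelicot Require Import Coquelicot.
Open Scope R_scope.

Record M2 := mkM2 { m11 : C; m12 : C; m21 : C; m22 : C }.

Definition selfadjoint (A : M2) : Prop :=
  m11 A = Cconj (m11 A) /\ m22 A = Cconj (m22 A) /\ m21 A = Cconj (m12 A).

Definition bounded_pot (V : Z -> M2) : Prop :=
  exists K : R, forall n : Z,
    Cmod (m11 (V n)) <= K /\ Cmod (m12 (V n)) <= K /\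
    Cmod (m21 (V n)) <= K /\ Cmod (m22 (V n)) <= K.

Definition admissible_pot (V : Z -> M2) : Prop :=
  bounded_pot V /\ forall n, selfadjoint (V n).

(* u(n) = (a(n), b(n)).  (S u)(n) = J u(n+1) + J u(n-1) + V(n) u(n),
   J = diag(1,0).  S u = z u, componentwise, as a formal equation on Z. *)
Definition is_solution (V : Z -> M2) (z : C) (u : Z -> C * C) : Prop :=
  forall n : Z,
    Cplus (Cplus (fst (u (n + 1)%Z)) (fst (u (n - 1)%Z)))
          (Cplus (Cmult (m11 (V n)) (fst (u n))) (Cmult (m12 (V n)) (snd (u n))))
      = Cmult z (fst (u n)) /\
    Cplus (Cmult (m21 (V n)) (fst (u n))) (Cmult (m22 (V n)) (snd (u n)))
      = Cmult z (snd (u n)).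

Definition sqnorm (v : C * C) : R := (Cmod (fst v))^2 + (Cmod (snd v))^2.

Definition nonzero_seq (u : Z -> C * C) : Prop := exists n, u n <> (RtoC 0, RtoC 0).

Definition l2_at_plus_infty (u : Z -> C * C) : Prop :=
  ex_series (fun k : nat => sqnorm (u (Z.of_nat k))).

Definition is_mplus (V : Z -> M2) (z : C) (m : C) : Prop :=
  exists u : Z -> C * C,
    is_solution V z u /\ nonzero_seq u /\ l2_at_plus_infty u /\
    m = Copp (Cdiv (fst (u 1%Z)) (fst (u 0%Z))).

(* E in T_delta: dist(E, {V22(n)}) >= delta (V22 is real-valued). *)
Definition in_T (V : Z -> M2) (delta E : R) : Prop :=
  forall n : Z, delta <= Rabs (E - Re (m22 (V n))).

Fixpoint partial_sq (u : Z -> C * C) (N : nat) : R :=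
  match N with
  | O => 0
  | S k => partial_sq u k + sqnorm (u (Z.of_nat (S k)))
  end.

Definition nfloor (L : R) : nat := Z.to_nat (Int_part L).

Definition normL (u : Z -> C * C) (L : R) : R :=
  sqrt (partial_sq u (nfloor L)
        + (L - INR (nfloor L)) * sqnorm (u (Z.of_nat (S (nfloor L))))).

(* Normalize the Weyl solution psi by a(0) = 1, a(1) = -m; then phi = u2 - m u1 is the
   solution at the real energy E with the same initial data.  Green's identity gives
   eps ||psi||^2 <= Im m <= |m|.  Since E stays away from the values of V22, the second
   component can be eliminated, both equations become three-term recurrences for a, and
   variation of constants (the Wronskian of u1, u2 is 1) writes psi - phi as a Duhamel sum
   with terms bounded by eps ||psi|| ||u_i||.  At the scale L_eps, where
   eps ||u1||_L ||u2||_L = 1/4, this gives ||phi||_L^2 <= 7 ||psi||_L^2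
   <= 28 |m| ||u1||_L ||u2||_L, and the triangle inequality for phi = u2 - m u1 then traps
   |m| ||u1||_L / ||u2||_L between 1/100 and 100. *)

From Stdlib Require Import Reals ZArith Lia Lra Psatz.
From Coquelicot Require Import Coquelicot.
(* Imported after Stdlib so that [nfloor] is the floor of Defs, not Stdlib's [nfloor]. *)
From Pilot Require Import Defs.
Open Scope R_scope.

(* Coquelicot's lemmas on [sum_n_m], restated with [Rplus]/[Cplus] so that [lra] and
   [ring] see the additions. *)
Lemma sum_n_m_Sm_R (a : nat -> R) (n m : nat) :
  (n <= S m)%nat -> sum_n_m a n (S m) = sum_n_m a n m + a (S m).
Proof. exact (sum_n_Sm a n m). Qed.

Lemma sum_n_m_Sm_C (a : nat -> C) (n m : nat) :
  (n <= S m)%nat -> sum_n_m a n (S m) = Cplus (sum_n_m a n m) (a (S m)).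
Proof. exact (sum_n_Sm a n m). Qed.

Lemma sum_n_m_plus_R (a b : nat -> R) (n m : nat) :
  sum_n_m (fun k => a k + b k) n m = sum_n_m a n m + sum_n_m b n m.
Proof. exact (sum_n_m_plus a b n m). Qed.

Lemma sum_n_m_scal_R (c : R) (a : nat -> R) (n m : nat) :
  sum_n_m (fun k => c * a k) n m = c * sum_n_m a n m.
Proof. exact (sum_n_m_mult_l c a n m). Qed.

Lemma sum_n_m_zero_R (a : nat -> R) (n m : nat) : (m < n)%nat -> sum_n_m a n m = 0.
Proof. exact (sum_n_m_zero a n m). Qed.

Lemma sum_n_m_le_loc (a b : nat -> R) (n m : nat) :
  (forall k, (n <= k <= m)%nat -> a k <= b k) -> sum_n_m a n m <= sum_n_m b n m.
Proof.
  induction m as [|m IH]; intros Hab.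
  - destruct n as [|n].
    + rewrite !sum_n_n. apply Hab; lia.
    + rewrite !sum_n_m_zero_R by lia. apply Rle_refl.
  - destruct (Nat.le_gt_cases n (S m)).
    + rewrite !sum_n_m_Sm_R by lia.
      apply Rplus_le_compat; [apply IH; intros; apply Hab|apply Hab]; lia.
    + rewrite !sum_n_m_zero_R by lia. apply Rle_refl.
Qed.

Lemma sum_n_m_nonneg (a : nat -> R) (n m : nat) :
  (forall k, 0 <= a k) -> 0 <= sum_n_m a n m.
Proof.
  intros Ha. rewrite <- (Rmult_0_r (INR (S m - n))), <- sum_n_m_const.
  now apply sum_n_m_le.
Qed.

Lemma sum_n_m_mono_upper (a : nat -> R) (n k m : nat) :
  (forall j, 0 <= a j) -> (k <= m)%nat -> sum_n_m a n k <= sum_n_m a n m.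
Proof.
  intros Ha Hkm. destruct (Nat.le_gt_cases n (S k)) as [Hnk|Hnk].
  - assert (Hsplit : sum_n_m a n m = sum_n_m a n k + sum_n_m a (S k) m)
      by exact (sum_n_m_Chasles a n k m Hnk Hkm).
    pose proof (sum_n_m_nonneg a (S k) m Ha). lra.
  - rewrite sum_n_m_zero_R by lia. now apply sum_n_m_nonneg.
Qed.

Lemma sqrt_mul_add_le (A B x y : R) : 0 <= A -> 0 <= B ->
  sqrt A * sqrt B + x * y <= sqrt (A + x ^ 2) * sqrt (B + y ^ 2).
Proof.
  intros HA HB.
  pose proof (sqrt_sqrt A HA). pose proof (sqrt_sqrt B HB).
  pose proof (sqrt_pos A). pose proof (sqrt_pos B).
  rewrite <- (sqrt_mult_alt (A + x ^ 2)) by nra.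
  apply Rle_trans with (1 := Rle_abs _).
  rewrite <- sqrt_Rsqr_abs. apply sqrt_le_1_alt. unfold Rsqr.
  pose proof (pow2_ge_0 (sqrt A * y - sqrt B * x)). nra.
Qed.

Lemma sum_n_m_Cauchy_Schwarz (x y : nat -> R) (n m : nat) :
  sum_n_m (fun k => x k * y k) n m <=
  sqrt (sum_n_m (fun k => x k ^ 2) n m) * sqrt (sum_n_m (fun k => y k ^ 2) n m).
Proof.
  assert (Hsq : forall (z : nat -> R) m, 0 <= sum_n_m (fun k => z k ^ 2) n m)
    by (intros; apply sum_n_m_nonneg; intros; apply pow2_ge_0).
  induction m as [|m IH].
  - destruct n as [|n].
    + rewrite !sum_n_n.
      pose proof (sqrt_mul_add_le 0 0 (x 0%nat) (y 0%nat) (Rle_refl 0) (Rle_refl 0)) as H.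
      rewrite sqrt_0, !Rplus_0_l in H. lra.
    + rewrite !sum_n_m_zero_R by lia. rewrite sqrt_0. lra.
  - destruct (Nat.le_gt_cases n (S m)).
    + rewrite !sum_n_m_Sm_R by lia.
      apply Rle_trans with (2 := sqrt_mul_add_le _ _ _ _ (Hsq x m) (Hsq y m)).
      apply Rplus_le_compat_r, IH.
    + rewrite !sum_n_m_zero_R by lia. rewrite sqrt_0. lra.
Qed.

(** * The truncated norm *)

Definition sqnorm_at (u : Z -> C * C) (k : nat) : R := sqnorm (u (Z.of_nat k)).

Definition trunc_sum (L : R) (f : nat -> R) : R :=
  sum_n_m f 1 (nfloor L) + (L - INR (nfloor L)) * f (S (nfloor L)).

Lemma nfloor_frac_bounds (L : R) : 0 <= L -> 0 <= L - INR (nfloor L) <= 1.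
Proof.
  intros HL. unfold nfloor. destruct (base_Int_part L) as [Hle Hgt].
  assert (-1 < Int_part L)%Z by (apply lt_IZR; lra).
  rewrite INR_IZR_INZ, Z2Nat.id by lia. lra.
Qed.

Lemma partial_sq_sum_n_m (u : Z -> C * C) (N : nat) :
  partial_sq u N = sum_n_m (sqnorm_at u) 1 N.
Proof.
  induction N as [|N IH].
  - rewrite sum_n_m_zero_R by lia. reflexivity.
  - rewrite sum_n_m_Sm_R by lia. simpl. now rewrite IH.
Qed.

Lemma normL_trunc_sum (u : Z -> C * C) (L : R) :
  normL u L = sqrt (trunc_sum L (sqnorm_at u)).
Proof. unfold normL, trunc_sum. now rewrite partial_sq_sum_n_m. Qed.

Section TruncSum.

Variable L : R.
Hypothesis HL : 0 <= L.

Lemma trunc_sum_le (f g : nat -> R) :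
  (forall k, (1 <= k <= S (nfloor L))%nat -> f k <= g k) -> trunc_sum L f <= trunc_sum L g.
Proof.
  intros Hfg. pose proof (nfloor_frac_bounds L HL). unfold trunc_sum.
  apply Rplus_le_compat.
  - apply sum_n_m_le_loc. intros; apply Hfg; lia.
  - apply Rmult_le_compat_l; [lra|]. apply Hfg; lia.
Qed.

Lemma trunc_sum_nonneg (f : nat -> R) : (forall k, 0 <= f k) -> 0 <= trunc_sum L f.
Proof.
  intros Hf. pose proof (nfloor_frac_bounds L HL). unfold trunc_sum.
  pose proof (sum_n_m_nonneg f 1 (nfloor L) Hf). pose proof (Hf (S (nfloor L))). nra.
Qed.

Lemma trunc_sum_plus (f g : nat -> R) :
  trunc_sum L (fun k => f k + g k) = trunc_sum L f + trunc_sum L g.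
Proof.
  unfold trunc_sum. rewrite sum_n_m_plus_R. ring.
Qed.

Lemma trunc_sum_scal (c : R) (f : nat -> R) :
  trunc_sum L (fun k => c * f k) = c * trunc_sum L f.
Proof.
  unfold trunc_sum. rewrite sum_n_m_scal_R. ring.
Qed.

Lemma sum_n_m_le_trunc_sum (f : nat -> R) (k : nat) :
  (forall j, 0 <= f j) -> (k <= nfloor L)%nat -> sum_n_m f 1 k <= trunc_sum L f.
Proof.
  intros Hf Hk. pose proof (nfloor_frac_bounds L HL). unfold trunc_sum.
  pose proof (sum_n_m_mono_upper f 1 k (nfloor L) Hf Hk). pose proof (Hf (S (nfloor L))). nra.
Qed.

Lemma trunc_sum_le_sum_n_m (f : nat -> R) :
  (forall j, 0 <= f j) -> trunc_sum L f <= sum_n_m f 1 (S (nfloor L)).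
Proof.
  intros Hf. pose proof (nfloor_frac_bounds L HL). unfold trunc_sum.
  rewrite sum_n_m_Sm_R by lia. pose proof (Hf (S (nfloor L))). nra.
Qed.

End TruncSum.

(** * Green's identity and the Weyl solution *)

Lemma Rabs_Im_le_Cmod (z : C) : Rabs (Im z) <= Cmod z.
Proof. exact (Rle_trans _ _ _ (Rmax_r _ _) (Rmax_Cmod z)). Qed.

Definition vscale (c : C) (v : C * C) : C * C := (Cmult c (fst v), Cmult c (snd v)).

Lemma sqnorm_vscale (c : C) (v : C * C) : sqnorm (vscale c v) = Cmod c ^ 2 * sqnorm v.
Proof. unfold sqnorm, vscale. simpl. rewrite !Cmod_mult. ring. Qed.

Lemma sqnorm_nonneg (v : C * C) : 0 <= sqnorm v.
Proof.
  unfold sqnorm. pose proof (pow2_ge_0 (Cmod (fst v))). pose proof (pow2_ge_0 (Cmod (snd v))). lra.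
Qed.

Lemma Cmod_fst_sq_le_sqnorm (v : C * C) : Cmod (fst v) ^ 2 <= sqnorm v.
Proof. unfold sqnorm. pose proof (pow2_ge_0 (Cmod (snd v))). lra. Qed.

Lemma Cmod_add_sq_le (x y : C) : Cmod (Cplus x y) ^ 2 <= 2 * Cmod x ^ 2 + 2 * Cmod y ^ 2.
Proof.
  pose proof (Cmod_triangle x y). pose proof (Cmod_ge_0 (Cplus x y)).
  pose proof (Cmod_ge_0 x). pose proof (Cmod_ge_0 y). pose proof (pow2_ge_0 (Cmod x - Cmod y)). nra.
Qed.

Lemma sqnorm_add_le (s v w : C * C) :
  fst s = Cplus (fst v) (fst w) -> snd s = Cplus (snd v) (snd w) ->
  sqnorm s <= 2 * sqnorm v + 2 * sqnorm w.
Proof.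
  intros H1 H2. unfold sqnorm. rewrite H1, H2.
  pose proof (Cmod_add_sq_le (fst v) (fst w)). pose proof (Cmod_add_sq_le (snd v) (snd w)). lra.
Qed.

Definition flux (u : Z -> C * C) (n : Z) : R :=
  Im (Cmult (Cconj (fst (u n))) (fst (u (n + 1)%Z))).

Lemma Rabs_flux_le (u : Z -> C * C) (n : Z) :
  Rabs (flux u n) <= (sqnorm (u n) + sqnorm (u (n + 1)%Z)) / 2.
Proof.
  unfold flux. set (a := fst (u n)). set (b := fst (u (n + 1)%Z)).
  apply Rle_trans with (Cmod a * Cmod b).
  - rewrite <- (Cmod_conj a), <- Cmod_mult. apply Rabs_Im_le_Cmod.
  - pose proof (Cmod_fst_sq_le_sqnorm (u n)) as Ha.
    pose proof (Cmod_fst_sq_le_sqnorm (u (n + 1)%Z)) as Hb.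
    fold a b in Ha, Hb. pose proof (pow2_ge_0 (Cmod a - Cmod b)). nra.
Qed.

Section ComplexEnergy.

Variable V : Z -> M2.
Hypothesis HV : forall n, selfadjoint (V n).
Variables (x eps : R).

(* Pair the first equation with conj a(n) and the second with conj b(n):
   self-adjointness of V(n) makes the potential terms cancel in the imaginary part. *)
Lemma flux_step (u : Z -> C * C) : is_solution V (x, eps) u ->
  forall n, flux u n - flux u (n - 1) = eps * sqnorm (u n).
Proof.
  intros Hsol n. destruct (Hsol n) as [e1 e2]. destruct (HV n) as [s11 [s22 s21]].
  unfold flux. replace (n - 1 + 1)%Z with n by lia. unfold sqnorm. rewrite !Cmod2_alt.
  destruct (V n) as [v11 v12 v21 v22]; simpl in *.
  destruct (u n) as [[x0 y0] [p q]], (u (n + 1)%Z) as [[x1 y1] c1], (u (n - 1)%Z) as [[x2 y2] c2].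
  destruct v11 as [r11 i11], v12 as [r12 i12], v21 as [r21 i21], v22 as [r22 i22].
  unfold Cconj, Cplus, Cmult, Re, Im in *; simpl in *.
  injection e1 as e1r e1i. injection e2 as e2r e2i.
  injection s11 as s11. injection s22 as s22. injection s21 as s21a s21b.
  assert (i11 = 0) by lra. assert (i22 = 0) by lra. subst.
  pose proof (f_equal (fun r => x0 * r) e1i). pose proof (f_equal (fun r => y0 * r) e1r).
  pose proof (f_equal (fun r => p * r) e2i). pose proof (f_equal (fun r => q * r) e2r).
  simpl in *. lra.
Qed.

Lemma flux_telescope (u : Z -> C * C) : is_solution V (x, eps) u ->
  forall N, eps * sum_n_m (sqnorm_at u) 1 N = flux u (Z.of_nat N) - flux u 0.
Proof.
  intros Hsol N. induction N as [|N IH].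
  - rewrite sum_n_m_zero_R by lia. simpl. ring.
  - rewrite sum_n_m_Sm_R, Rmult_plus_distr_l, IH by lia.
    pose proof (flux_step u Hsol (Z.of_nat (S N))) as Hstep.
    replace (Z.of_nat (S N) - 1)%Z with (Z.of_nat N) in Hstep by lia.
    unfold sqnorm_at. lra.
Qed.

Lemma flux_mass_le (u : Z -> C * C) : 0 <= eps -> is_solution V (x, eps) u ->
  l2_at_plus_infty u -> forall M, eps * sum_n_m (sqnorm_at u) 1 M <= - flux u 0.
Proof.
  intros Heps Hsol Hl2 M.
  assert (Hs : is_lim_seq (sqnorm_at u) 0) by exact (ex_series_lim_0 _ Hl2).
  assert (Hlim : is_lim_seq (fun N => sqnorm_at u N + sqnorm_at u (S N) - flux u 0) (- flux u 0)).
  { replace (- flux u 0) with (0 + 0 - flux u 0) by ring.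
    apply is_lim_seq_minus'; [apply is_lim_seq_plus'|apply is_lim_seq_const]; [exact Hs|].
    now apply (is_lim_seq_incr_1 (sqnorm_at u)). }
  change (Rbar_le (eps * sum_n_m (sqnorm_at u) 1 M) (- flux u 0)).
  apply (is_lim_seq_le_loc (fun _ => eps * sum_n_m (sqnorm_at u) 1 M)
    (fun N => sqnorm_at u N + sqnorm_at u (S N) - flux u 0)).
  - exists M. intros N HN.
    pose proof (flux_telescope u Hsol N) as Htel.
    pose proof (sum_n_m_mono_upper (sqnorm_at u) 1 M N (fun k => sqnorm_nonneg _) HN).
    pose proof (Rle_abs (flux u (Z.of_nat N))). pose proof (Rabs_flux_le u (Z.of_nat N)).
    pose proof (sqnorm_nonneg (u (Z.of_nat N))). pose proof (sqnorm_nonneg (u (Z.of_nat N + 1)%Z)).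
    replace (Z.of_nat N + 1)%Z with (Z.of_nat (S N)) in * by lia.
    unfold sqnorm_at in *. nra.
  - apply is_lim_seq_const.
  - exact Hlim.
Qed.

Lemma solution_snd_zero (u : Z -> C * C) (n : Z) : eps <> 0 -> is_solution V (x, eps) u ->
  fst (u n) = RtoC 0 -> snd (u n) = RtoC 0.
Proof.
  intros Heps Hsol Ha. destruct (Hsol n) as [_ e2]. rewrite Ha in e2.
  assert (Hz : Cminus (x, eps) (m22 (V n)) <> RtoC 0).
  { intros H. apply (f_equal Im) in H. destruct (HV n) as [_ [s22 _]].
    apply (f_equal Im) in s22. unfold Cconj, Im, Cminus, Cplus, Copp in *; simpl in *. lra. }
  assert (Hb : snd (u n) = Cdiv (Cminus (Cmult (x, eps) (snd (u n)))
      (Cplus (Cmult (m21 (V n)) (RtoC 0)) (Cmult (m22 (V n)) (snd (u n)))))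
      (Cminus (x, eps) (m22 (V n)))) by (field; exact Hz).
  rewrite e2 in Hb. rewrite Hb. field. exact Hz.
Qed.

Lemma solution_zero (u : Z -> C * C) : eps <> 0 -> is_solution V (x, eps) u ->
  fst (u 0%Z) = RtoC 0 -> fst (u 1%Z) = RtoC 0 -> forall n, u n = (RtoC 0, RtoC 0).
Proof.
  intros Heps Hsol Ha0 Ha1.
  assert (Hstep : forall n, fst (u n) = RtoC 0 ->
    fst (u (n + 1)%Z) = Copp (fst (u (n - 1)%Z))).
  { intros n Ha. destruct (Hsol n) as [e1 _].
    rewrite Ha, (solution_snd_zero u n Heps Hsol Ha) in e1.
    match type of e1 with ?l = ?r =>
      transitivity (Cminus (Cminus (fst (u (n + 1)%Z)) l) r); [rewrite e1|]; ring end. }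
  assert (Hpair : forall n, fst (u n) = RtoC 0 /\ fst (u (n + 1)%Z) = RtoC 0).
  { apply Z.peano_ind.
    - split; assumption.
    - intros n [h0 h1]. rewrite <- Z.add_1_r. split; [exact h1|].
      rewrite Hstep by exact h1. replace (n + 1 - 1)%Z with n by lia. rewrite h0. ring.
    - intros n [h0 h1]. rewrite <- Z.sub_1_r. replace (n - 1 + 1)%Z with n by lia.
      split; [|exact h0].
      pose proof (Hstep n h0) as H. rewrite h1 in H.
      transitivity (Copp (Copp (fst (u (n - 1)%Z)))); [ring|]. rewrite <- H. ring. }
  intros n. destruct (Hpair n) as [ha _].
  rewrite (surjective_pairing (u n)), ha, (solution_snd_zero u n Heps Hsol ha). reflexivity.
Qed.

Lemma weyl_fst0_neq0 (u : Z -> C * C) : 0 < eps -> is_solution V (x, eps) u ->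
  nonzero_seq u -> l2_at_plus_infty u -> fst (u 0%Z) <> RtoC 0.
Proof.
  intros Heps Hsol [n Hn] Hl2 Ha0. apply Hn.
  assert (Hflux : flux u 0 = 0) by (unfold flux; rewrite Ha0; simpl; ring).
  pose proof (flux_mass_le u (Rlt_le _ _ Heps) Hsol Hl2 1) as H.
  rewrite Hflux, sum_n_n, Ropp_0 in H. change (sqnorm_at u 1) with (sqnorm (u 1%Z)) in H.
  pose proof (Cmod_fst_sq_le_sqnorm (u 1%Z)). pose proof (Cmod_ge_0 (fst (u 1%Z))).
  assert (sqnorm (u 1%Z) <= 0) by nra.
  assert (Ha1 : fst (u 1%Z) = RtoC 0) by (apply Cmod_eq_0; nra).
  exact (solution_zero u (Rgt_not_eq _ _ Heps) Hsol Ha0 Ha1 n).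
Qed.

Lemma is_solution_vscale (z c : C) (u : Z -> C * C) :
  is_solution V z u -> is_solution V z (fun n => vscale c (u n)).
Proof.
  intros Hsol n. destruct (Hsol n) as [e1 e2]. unfold vscale. simpl. split.
  - match type of e1 with ?l = ?r => transitivity (Cmult c l); [ring|rewrite e1; ring] end.
  - match type of e2 with ?l = ?r => transitivity (Cmult c l); [ring|rewrite e2; ring] end.
Qed.

Lemma weyl_normalized (m : C) : 0 < eps -> is_mplus V (x, eps) m ->
  exists psi, is_solution V (x, eps) psi /\ l2_at_plus_infty psi /\
    fst (psi 0%Z) = RtoC 1 /\ fst (psi 1%Z) = Copp m.
Proof.
  intros Heps [u [Hsol [Hnz [Hl2 Hm]]]].
  pose proof (weyl_fst0_neq0 u Heps Hsol Hnz Hl2) as H0.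
  exists (fun n => vscale (Cinv (fst (u 0%Z))) (u n)).
  split; [now apply is_solution_vscale|]. split; [|unfold vscale; simpl; split].
  - unfold l2_at_plus_infty. eapply ex_series_ext.
    + intros k. symmetry. apply sqnorm_vscale.
    + exact (ex_series_scal_l (Cmod (Cinv (fst (u 0%Z))) ^ 2) _ Hl2).
  - field. exact H0.
  - rewrite Hm. field. exact H0.
Qed.

Lemma weyl_mass_le_Cmod (psi : Z -> C * C) (m : C) (L : R) : 0 <= eps -> 0 <= L ->
  is_solution V (x, eps) psi -> l2_at_plus_infty psi ->
  fst (psi 0%Z) = RtoC 1 -> fst (psi 1%Z) = Copp m ->
  eps * trunc_sum L (sqnorm_at psi) <= Cmod m.
Proof.
  intros Heps HL Hsol Hl2 H0 H1.
  assert (Hflux : flux psi 0 = - Im m).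
  { unfold flux. simpl. rewrite H0, H1. destruct m. simpl. ring. }
  pose proof (flux_mass_le psi Heps Hsol Hl2 (S (nfloor L))).
  pose proof (trunc_sum_le_sum_n_m L HL (sqnorm_at psi) (fun k => sqnorm_nonneg _)).
  pose proof (Rabs_Im_le_Cmod m). pose proof (Rle_abs (Im m)). nra.
Qed.

End ComplexEnergy.

(** * Variation of constants for a three-term recurrence *)

Lemma sum_n_m_zero_C (a : nat -> C) (n m : nat) : (m < n)%nat -> sum_n_m a n m = RtoC 0.
Proof. exact (sum_n_m_zero a n m). Qed.

Section SecondOrderRecurrence.

Variable r : nat -> C.

(* Only used at [n >= 1], where [pred n = n - 1]. *)
Definition jacobi_res (a : nat -> C) (n : nat) : C :=
  Cplus (Cplus (a (S n)) (a (pred n))) (Cmult (r n) (a n)).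

Lemma jacobi_next (a : nat -> C) (k : nat) :
  a (S (S k)) = Cminus (Cminus (jacobi_res a (S k)) (a k)) (Cmult (r (S k)) (a (S k))).
Proof. unfold jacobi_res. simpl. ring. Qed.

Definition duhamel_sum (y p : nat -> C) (k : nat) : C :=
  sum_n_m (fun j => Cmult (y j) (jacobi_res p j)) 1 k.

Variables y1 y2 : nat -> C.
Hypotheses (Hy1 : forall k, jacobi_res y1 (S k) = RtoC 0)
           (Hy2 : forall k, jacobi_res y2 (S k) = RtoC 0).
Hypotheses (Hy10 : y1 0%nat = RtoC 0) (Hy11 : y1 1%nat = RtoC 1)
           (Hy20 : y2 0%nat = RtoC 1) (Hy21 : y2 1%nat = RtoC 0).

Lemma wronskian_eq1 (k : nat) :
  Cminus (Cmult (y1 (S k)) (y2 k)) (Cmult (y2 (S k)) (y1 k)) = RtoC 1.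
Proof.
  induction k as [|k IH].
  - rewrite Hy10, Hy11, Hy20, Hy21. ring.
  - rewrite (jacobi_next y1 k), (jacobi_next y2 k), Hy1, Hy2, <- IH. ring.
Qed.

Lemma variation_of_constants_full (p : nat -> C) (k : nat) :
  p k = Cplus (Cplus (Cmult (p 0%nat) (y2 k)) (Cmult (p 1%nat) (y1 k)))
    (Cminus (Cmult (y1 k) (duhamel_sum y2 p k)) (Cmult (y2 k) (duhamel_sum y1 p k))).
Proof.
  revert k. unfold duhamel_sum. apply Nat.pair_induction.
  - intros ? ? ->. reflexivity.
  - rewrite !sum_n_m_zero_C by lia. rewrite Hy10, Hy20. ring.
  - rewrite !sum_n_n, Hy11, Hy21. ring.
  - intros k IH0 IH1. rewrite !sum_n_m_Sm_C in IH1 by lia. rewrite !sum_n_m_Sm_C by lia.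
    rewrite (jacobi_next p k), (jacobi_next y1 k), (jacobi_next y2 k), Hy1, Hy2, IH0, IH1.
    match goal with |- ?lhs = ?rhs =>
      transitivity (Cplus rhs (Cmult (jacobi_res p (S k))
        (Cminus (RtoC 1) (Cminus (Cmult (y1 (S k)) (y2 k)) (Cmult (y2 (S k)) (y1 k))))));
      [ring | rewrite wronskian_eq1; ring] end.
Qed.

(* The [j = S k] terms of the two Duhamel sums cancel, so the sums may stop at [k]; at the
   last site [S (nfloor L)] of a truncated norm they then only see sites of full weight. *)
Lemma variation_of_constants (p : nat -> C) (k : nat) :
  p (S k) = Cplus (Cplus (Cmult (p 0%nat) (y2 (S k))) (Cmult (p 1%nat) (y1 (S k))))
    (Cminus (Cmult (y1 (S k)) (duhamel_sum y2 p k)) (Cmult (y2 (S k)) (duhamel_sum y1 p k))).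
Proof.
  rewrite (variation_of_constants_full p (S k)) at 1.
  unfold duhamel_sum. rewrite !sum_n_m_Sm_C by lia. ring.
Qed.

End SecondOrderRecurrence.

(** * Eliminating the second component at a real energy *)

Definition fst_at (u : Z -> C * C) (k : nat) : C := fst (u (Z.of_nat k)).

Lemma Cmod_sub_m22_sq (A : M2) (x y : R) : selfadjoint A ->
  Cmod (Cminus (x, y) (m22 A)) ^ 2 = (x - Re (m22 A)) ^ 2 + y ^ 2.
Proof.
  intros [_ [s22 _]]. rewrite Cmod2_alt. apply (f_equal Im) in s22.
  destruct (m22 A) as [a b]. unfold Cconj, Cminus, Cplus, Copp, Re, Im in *. simpl in *.
  replace b with 0 by lra. ring.
Qed.

Lemma in_T_sub_m22_neq0 (V : Z -> M2) (delta E : R) : 0 < delta -> in_T V delta E ->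
  forall n, Cminus (RtoC E) (m22 (V n)) <> RtoC 0.
Proof.
  intros Hdelta HT n Heq. specialize (HT n). apply (f_equal Re) in Heq.
  unfold Re in *. simpl in Heq. replace (E - fst (m22 (V n))) with 0 in HT by lra.
  rewrite Rabs_R0 in HT. lra.
Qed.

(* The solution at energy [E] with the initial data of the normalized Weyl solution. *)
Definition lincomb (u1 u2 : Z -> C * C) (m : C) (n : Z) : C * C :=
  (Cminus (fst (u2 n)) (Cmult m (fst (u1 n))), Cminus (snd (u2 n)) (Cmult m (snd (u1 n)))).

Lemma sq_sum3_le (a b c : R) : (a + b + c) ^ 2 <= 3 * (a ^ 2 + b ^ 2 + c ^ 2).
Proof.
  pose proof (pow2_ge_0 (a - b)). pose proof (pow2_ge_0 (a - c)).
  pose proof (pow2_ge_0 (b - c)). nra.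
Qed.

Section RealEnergy.

Variables (V : Z -> M2) (E : R).
Hypothesis HV : forall n, selfadjoint (V n).
Hypothesis HE : forall n, Cminus (RtoC E) (m22 (V n)) <> RtoC 0.

(* At energy [E] the second equation gives [b n = coupling n * a n], and the first becomes
   [a (n + 1) + a (n - 1) + reduced_pot n * a n = 0]. *)
Definition coupling (n : Z) : C := Cdiv (m21 (V n)) (Cminus (RtoC E) (m22 (V n))).

Definition reduced_pot (k : nat) : C :=
  Cminus (Cplus (m11 (V (Z.of_nat k))) (Cmult (m12 (V (Z.of_nat k))) (coupling (Z.of_nat k))))
    (RtoC E).

Lemma Cmod_coupling_adjoint (n : Z) :
  Cmod (Cdiv (m12 (V n)) (Cminus (RtoC E) (m22 (V n)))) = Cmod (coupling n).
Proof.
  unfold coupling. rewrite !Cmod_div by apply HE.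
  destruct (HV n) as [_ [_ H21]]. now rewrite H21, Cmod_conj.
Qed.

Lemma solution_snd_real (u : Z -> C * C) (n : Z) : is_solution V (RtoC E) u ->
  snd (u n) = Cmult (coupling n) (fst (u n)).
Proof.
  intros Hsol. destruct (Hsol n) as [_ e2]. unfold coupling.
  transitivity (Cplus (snd (u n)) (Cdiv (Cminus (Cplus (Cmult (m21 (V n)) (fst (u n)))
    (Cmult (m22 (V n)) (snd (u n)))) (Cmult (RtoC E) (snd (u n)))) (Cminus (RtoC E) (m22 (V n))))).
  - rewrite e2. field. apply HE.
  - field. apply HE.
Qed.

Lemma sqnorm_solution_real (u : Z -> C * C) (n : Z) : is_solution V (RtoC E) u ->
  sqnorm (u n) = (1 + Cmod (coupling n) ^ 2) * Cmod (fst (u n)) ^ 2.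
Proof. intros Hsol. unfold sqnorm. rewrite (solution_snd_real u n Hsol), Cmod_mult. ring. Qed.

Lemma jacobi_res_solution (z : C) (u : Z -> C * C) (k : nat) : is_solution V z u ->
  jacobi_res reduced_pot (fst_at u) (S k) =
  Cmult (Cminus z (RtoC E)) (Cplus (fst_at u (S k))
    (Cmult (Cdiv (m12 (V (Z.of_nat (S k)))) (Cminus (RtoC E) (m22 (V (Z.of_nat (S k))))))
      (snd (u (Z.of_nat (S k)))))).
Proof.
  intros Hsol. unfold jacobi_res, reduced_pot, coupling, fst_at. simpl pred.
  set (n := Z.of_nat (S k)). destruct (Hsol n) as [e1 e2].
  replace (Z.of_nat (S (S k))) with (n + 1)%Z by (unfold n; lia).
  replace (Z.of_nat k) with (n - 1)%Z by (unfold n; lia).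
  assert (HX : Cplus (fst (u (n + 1)%Z)) (fst (u (n - 1)%Z)) =
    Cminus (Cmult z (fst (u n)))
      (Cplus (Cmult (m11 (V n)) (fst (u n))) (Cmult (m12 (V n)) (snd (u n)))))
    by (rewrite <- e1; ring).
  rewrite HX.
  transitivity (Cplus (Cmult (Cminus z (RtoC E)) (Cplus (fst (u n))
    (Cmult (Cdiv (m12 (V n)) (Cminus (RtoC E) (m22 (V n)))) (snd (u n)))))
    (Cmult (Cdiv (m12 (V n)) (Cminus (RtoC E) (m22 (V n))))
      (Cminus (Cplus (Cmult (m21 (V n)) (fst (u n))) (Cmult (m22 (V n)) (snd (u n))))
        (Cmult z (snd (u n)))))).
  - field. apply HE.
  - rewrite e2. ring.
Qed.

Lemma jacobi_res_real (u : Z -> C * C) (k : nat) : is_solution V (RtoC E) u ->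
  jacobi_res reduced_pot (fst_at u) (S k) = RtoC 0.
Proof. intros Hsol. rewrite (jacobi_res_solution _ u k Hsol). ring. Qed.

Section Perturbation.

Variables (eps : R) (psi : Z -> C * C).
Hypothesis Heps : 0 <= eps.
Hypothesis Hpsi : is_solution V (E, eps) psi.

Lemma Cmod_fst_mul_jacobi_res_le (u : Z -> C * C) (k : nat) : is_solution V (RtoC E) u ->
  Cmod (fst_at u (S k)) * Cmod (jacobi_res reduced_pot (fst_at psi) (S k)) <=
  eps * (sqrt (sqnorm_at psi (S k)) * sqrt (sqnorm_at u (S k))).
Proof.
  intros Hu. rewrite (jacobi_res_solution _ psi k Hpsi), Cmod_mult.
  unfold sqnorm_at, fst_at. set (n := Z.of_nat (S k)).
  rewrite (sqnorm_solution_real u n Hu).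
  assert (Hz : Cmod (Cminus (E, eps) (RtoC E)) = eps).
  { transitivity (sqrt (eps ^ 2)); [unfold Cmod; f_equal; simpl; ring | now apply sqrt_pow2]. }
  rewrite Hz.
  set (a := Cmod (fst (u n))). set (c := Cmod (coupling n)).
  set (pa := Cmod (fst (psi n))). set (pb := Cmod (snd (psi n))).
  assert (Htri : Cmod (Cplus (fst (psi n)) (Cmult (Cdiv (m12 (V n)) (Cminus (RtoC E) (m22 (V n))))
    (snd (psi n)))) <= pa + pb * c).
  { eapply Rle_trans; [apply Cmod_triangle|]. rewrite Cmod_mult, Cmod_coupling_adjoint.
    unfold pa, pb, c. lra. }
  assert (Hcs : pa + pb * c <= sqrt (pa ^ 2 + pb ^ 2) * sqrt (1 + c ^ 2)).
  { pose proof (sqrt_mul_add_le (pa ^ 2) 1 pb c (pow2_ge_0 _) Rle_0_1) as H.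
    rewrite sqrt_pow2, sqrt_1, Rmult_1_r in H by apply Cmod_ge_0. exact H. }
  assert (Hsq : sqrt ((1 + c ^ 2) * a ^ 2) = sqrt (1 + c ^ 2) * a).
  { rewrite sqrt_mult_alt, sqrt_pow2 by (apply Cmod_ge_0 || (pose proof (pow2_ge_0 c); lra)).
    reflexivity. }
  unfold sqnorm. fold pa pb. rewrite Hsq.
  assert (0 <= a) by apply Cmod_ge_0.
  apply Rle_trans with (a * (eps * (pa + pb * c))).
  - apply Rmult_le_compat_l; [assumption|]. now apply Rmult_le_compat_l.
  - replace (eps * (sqrt (pa ^ 2 + pb ^ 2) * (sqrt (1 + c ^ 2) * a)))
      with (a * (eps * (sqrt (pa ^ 2 + pb ^ 2) * sqrt (1 + c ^ 2)))) by ring.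
    apply Rmult_le_compat_l; [assumption|]. now apply Rmult_le_compat_l.
Qed.

Lemma sqnorm_fst_le (n : Z) : eps <= Rabs (E - Re (m22 (V n))) ->
  (1 + Cmod (coupling n) ^ 2) * Cmod (fst (psi n)) ^ 2 <= 2 * sqnorm (psi n).
Proof.
  intros Hsmall. destruct (Hpsi n) as [_ e2].
  assert (H21 : Cmult (m21 (V n)) (fst (psi n)) =
    Cmult (Cminus (E, eps) (m22 (V n))) (snd (psi n))).
  { transitivity (Cminus (Cplus (Cmult (m21 (V n)) (fst (psi n))) (Cmult (m22 (V n)) (snd (psi n))))
      (Cmult (m22 (V n)) (snd (psi n)))); [ring|rewrite e2; ring]. }
  assert (Hc : Cmod (coupling n) * Cmod (fst (psi n)) = Cmod (Cminus (E, eps) (m22 (V n))) *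
    Cmod (snd (psi n)) / Cmod (Cminus (RtoC E) (m22 (V n)))).
  { rewrite <- !Cmod_mult, <- Cmod_div by apply HE. rewrite <- H21.
    unfold coupling. f_equal. field. apply HE. }
  pose proof (Cmod_sub_m22_sq (V n) E 0 (HV n)) as Hd. change (E, 0) with (RtoC E) in Hd.
  pose proof (Cmod_sub_m22_sq (V n) E eps (HV n)) as Hw.
  pose proof (proj1 (Cmod_gt_0 _) (HE n)) as Hdpos.
  assert (Heps2 : eps ^ 2 <= (E - Re (m22 (V n))) ^ 2)
    by (rewrite <- (pow2_abs (E - Re (m22 (V n)))); apply pow_incr; split; assumption).
  set (d := Cmod (Cminus (RtoC E) (m22 (V n)))) in *.
  set (w := Cmod (Cminus (E, eps) (m22 (V n)))) in *.
  set (pb := Cmod (snd (psi n))) in *.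
  assert (Hratio : w ^ 2 / d ^ 2 <= 2).
  { apply Rmult_le_reg_r with (d ^ 2); [nra|]. unfold Rdiv.
    rewrite Rmult_assoc, Rinv_l, Rmult_1_r by nra. nra. }
  assert (Hb : (w * pb / d) ^ 2 <= 2 * pb ^ 2).
  { replace ((w * pb / d) ^ 2) with (w ^ 2 / d ^ 2 * pb ^ 2) by (field; lra).
    apply Rmult_le_compat_r; [apply pow2_ge_0|exact Hratio]. }
  replace ((1 + Cmod (coupling n) ^ 2) * Cmod (fst (psi n)) ^ 2)
    with (Cmod (fst (psi n)) ^ 2 + (Cmod (coupling n) * Cmod (fst (psi n))) ^ 2) by ring.
  rewrite Hc. unfold sqnorm. fold pb. pose proof (pow2_ge_0 (Cmod (fst (psi n)))). lra.
Qed.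

Lemma Cmod_duhamel_le (u : Z -> C * C) (k : nat) : is_solution V (RtoC E) u ->
  Cmod (duhamel_sum reduced_pot (fst_at u) (fst_at psi) k) <=
  eps * (sqrt (sum_n_m (sqnorm_at psi) 1 k) * sqrt (sum_n_m (sqnorm_at u) 1 k)).
Proof.
  intros Hu. unfold duhamel_sum.
  eapply Rle_trans; [exact (norm_sum_n_m (K := C_AbsRing) (V := C_NormedModule) _ 1 k)|].
  eapply Rle_trans.
  { apply (sum_n_m_le_loc _ (fun j => eps * (sqrt (sqnorm_at psi j) * sqrt (sqnorm_at u j)))).
    intros [|j] Hj; [lia|].
    change (Cmod (Cmult (fst_at u (S j)) (jacobi_res reduced_pot (fst_at psi) (S j))) <=
      eps * (sqrt (sqnorm_at psi (S j)) * sqrt (sqnorm_at u (S j)))).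
    rewrite Cmod_mult. now apply Cmod_fst_mul_jacobi_res_le. }
  rewrite sum_n_m_scal_R. apply Rmult_le_compat_l; [exact Heps|].
  eapply Rle_trans; [apply sum_n_m_Cauchy_Schwarz|].
  cbv beta.
  rewrite (sum_n_m_ext (fun j => sqrt (sqnorm_at psi j) ^ 2) (sqnorm_at psi)),
    (sum_n_m_ext (fun j => sqrt (sqnorm_at u j) ^ 2) (sqnorm_at u))
    by (intros; apply pow2_sqrt, sqnorm_nonneg).
  apply Rle_refl.
Qed.

Section Comparison.

Variables (u1 u2 : Z -> C * C) (m : C).
Hypotheses (Hu1 : is_solution V (RtoC E) u1) (Hu2 : is_solution V (RtoC E) u2).
Hypotheses (Hu11 : fst (u1 1%Z) = RtoC 1) (Hu10 : fst (u1 0%Z) = RtoC 0)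
           (Hu21 : fst (u2 1%Z) = RtoC 0) (Hu20 : fst (u2 0%Z) = RtoC 1).
Hypotheses (Hpsi0 : fst (psi 0%Z) = RtoC 1) (Hpsi1 : fst (psi 1%Z) = Copp m).
Hypothesis Hsmall : forall n, eps <= Rabs (E - Re (m22 (V n))).

Let D (u : Z -> C * C) (k : nat) : C := duhamel_sum reduced_pot (fst_at u) (fst_at psi) k.

Lemma fst_lincomb_variation (k : nat) :
  fst (lincomb u1 u2 m (Z.of_nat (S k))) =
  Cminus (fst_at psi (S k))
    (Cminus (Cmult (fst_at u1 (S k)) (D u2 k)) (Cmult (fst_at u2 (S k)) (D u1 k))).
Proof.
  rewrite (variation_of_constants reduced_pot (fst_at u1) (fst_at u2)
    (fun j => jacobi_res_real u1 j Hu1) (fun j => jacobi_res_real u2 j Hu2)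
    Hu10 Hu11 Hu20 Hu21 (fst_at psi) k).
  change (fst_at psi 0) with (fst (psi 0%Z)). change (fst_at psi 1) with (fst (psi 1%Z)).
  rewrite Hpsi0, Hpsi1. unfold lincomb, D. cbn [fst].
  change (fst (u1 (Z.of_nat (S k)))) with (fst_at u1 (S k)).
  change (fst (u2 (Z.of_nat (S k)))) with (fst_at u2 (S k)). ring.
Qed.

Lemma sqnorm_lincomb_le (k : nat) (X1 X2 : R) : Cmod (D u1 k) <= X1 -> Cmod (D u2 k) <= X2 ->
  sqnorm_at (lincomb u1 u2 m) (S k) <=
  6 * sqnorm_at psi (S k) + 3 * X2 ^ 2 * sqnorm_at u1 (S k) + 3 * X1 ^ 2 * sqnorm_at u2 (S k).
Proof.
  intros HX1 HX2. unfold sqnorm_at. set (n := Z.of_nat (S k)).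
  assert (Hsnd : snd (lincomb u1 u2 m n) = Cmult (coupling n) (fst (lincomb u1 u2 m n))).
  { unfold lincomb. simpl.
    rewrite (solution_snd_real u1 n Hu1), (solution_snd_real u2 n Hu2). ring. }
  assert (Hfst : Cmod (fst (lincomb u1 u2 m n)) <=
    Cmod (fst (psi n)) + Cmod (fst (u1 n)) * X2 + Cmod (fst (u2 n)) * X1).
  { unfold n. rewrite fst_lincomb_variation. unfold fst_at. fold n.
    eapply Rle_trans; [apply Cmod_triangle|]. rewrite Cmod_opp.
    eapply Rle_trans; [apply Rplus_le_compat_l, Cmod_triangle|]. rewrite Cmod_opp, !Cmod_mult.
    pose proof (Rmult_le_compat_l _ _ _ (Cmod_ge_0 (fst (u1 n))) HX2).
    pose proof (Rmult_le_compat_l _ _ _ (Cmod_ge_0 (fst (u2 n))) HX1). lra. }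
  assert (Hsq : sqnorm (lincomb u1 u2 m n) =
    (1 + Cmod (coupling n) ^ 2) * Cmod (fst (lincomb u1 u2 m n)) ^ 2)
    by (unfold sqnorm; rewrite Hsnd, Cmod_mult; ring).
  rewrite Hsq, (sqnorm_solution_real u1 n Hu1), (sqnorm_solution_real u2 n Hu2).
  pose proof (sqnorm_fst_le n (Hsmall n)) as Hpsi_n.
  set (K := 1 + Cmod (coupling n) ^ 2) in *.
  assert (HK : 0 <= K) by (pose proof (pow2_ge_0 (Cmod (coupling n))); unfold K; lra).
  assert (Hsq3 : Cmod (fst (lincomb u1 u2 m n)) ^ 2 <=
    3 * (Cmod (fst (psi n)) ^ 2 + (Cmod (fst (u1 n)) * X2) ^ 2 + (Cmod (fst (u2 n)) * X1) ^ 2)).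
  { apply Rle_trans
      with ((Cmod (fst (psi n)) + Cmod (fst (u1 n)) * X2 + Cmod (fst (u2 n)) * X1) ^ 2).
    - apply pow_incr. split; [apply Cmod_ge_0|exact Hfst].
    - apply sq_sum3_le. }
  apply Rle_trans with (K * (3 * (Cmod (fst (psi n)) ^ 2 + (Cmod (fst (u1 n)) * X2) ^ 2 +
    (Cmod (fst (u2 n)) * X1) ^ 2))); [now apply Rmult_le_compat_l|].
  lra.
Qed.

Lemma trunc_sum_lincomb_le (L : R) : 0 <= L ->
  trunc_sum L (sqnorm_at (lincomb u1 u2 m)) <=
  6 * trunc_sum L (sqnorm_at psi) *
    (1 + eps ^ 2 * trunc_sum L (sqnorm_at u1) * trunc_sum L (sqnorm_at u2)).
Proof.
  intros HL.
  set (WQ := trunc_sum L (sqnorm_at psi)).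
  set (W1 := trunc_sum L (sqnorm_at u1)). set (W2 := trunc_sum L (sqnorm_at u2)).
  assert (Hpartial : forall u k, (k <= nfloor L)%nat ->
    sqrt (sum_n_m (sqnorm_at u) 1 k) <= sqrt (trunc_sum L (sqnorm_at u))).
  { intros u k Hk. apply sqrt_le_1_alt, sum_n_m_le_trunc_sum; auto. intros; apply sqnorm_nonneg. }
  assert (HX : forall u k, is_solution V (RtoC E) u -> (k <= nfloor L)%nat ->
    Cmod (D u k) <= eps * (sqrt WQ * sqrt (trunc_sum L (sqnorm_at u)))).
  { intros u k Hu Hk. eapply Rle_trans; [now apply Cmod_duhamel_le|].
    apply Rmult_le_compat_l; [exact Heps|].
    apply Rmult_le_compat; try apply sqrt_pos; now apply Hpartial. }
  apply Rle_trans with (trunc_sum L (fun k => 6 * sqnorm_at psi k +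
    3 * (eps * (sqrt WQ * sqrt W2)) ^ 2 * sqnorm_at u1 k +
    3 * (eps * (sqrt WQ * sqrt W1)) ^ 2 * sqnorm_at u2 k)).
  - apply trunc_sum_le; [exact HL|]. intros [|k] Hk; [lia|].
    apply sqnorm_lincomb_le; apply HX; auto; lia.
  - rewrite !trunc_sum_plus, !trunc_sum_scal. fold WQ W1 W2.
    assert (Hnn : forall u, 0 <= trunc_sum L (sqnorm_at u))
      by (intros; apply trunc_sum_nonneg; [exact HL|intros; apply sqnorm_nonneg]).
    rewrite !Rpow_mult_distr, !pow2_sqrt by apply Hnn.
    apply Req_le. ring.
Qed.

End Comparison.

End Perturbation.

End RealEnergy.

Lemma trunc_sum_snd_le (u1 u2 : Z -> C * C) (m : C) (L : R) : 0 <= L ->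
  trunc_sum L (sqnorm_at u2) <=
  2 * trunc_sum L (sqnorm_at (lincomb u1 u2 m)) + 2 * (Cmod m ^ 2 * trunc_sum L (sqnorm_at u1)).
Proof.
  intros HL.
  apply Rle_trans with (trunc_sum L (fun k =>
    2 * sqnorm_at (lincomb u1 u2 m) k + 2 * (Cmod m ^ 2 * sqnorm_at u1 k))).
  - apply trunc_sum_le; [exact HL|]. intros k _. unfold sqnorm_at.
    rewrite <- sqnorm_vscale.
    apply sqnorm_add_le; unfold lincomb, vscale; simpl; ring.
  - rewrite trunc_sum_plus, !trunc_sum_scal. apply Rle_refl.
Qed.

Lemma trunc_sum_fst_le (u1 u2 : Z -> C * C) (m : C) (L : R) : 0 <= L ->
  Cmod m ^ 2 * trunc_sum L (sqnorm_at u1) <=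
  2 * trunc_sum L (sqnorm_at (lincomb u1 u2 m)) + 2 * trunc_sum L (sqnorm_at u2).
Proof.
  intros HL. rewrite <- trunc_sum_scal.
  apply Rle_trans with (trunc_sum L (fun k =>
    2 * sqnorm_at u2 k + 2 * (Cmod (Copp (RtoC 1)) ^ 2 * sqnorm_at (lincomb u1 u2 m) k))).
  - apply trunc_sum_le; [exact HL|]. intros k _. unfold sqnorm_at.
    rewrite <- !sqnorm_vscale.
    apply sqnorm_add_le; unfold lincomb, vscale; simpl; ring.
  - rewrite Cmod_m1, trunc_sum_plus, !trunc_sum_scal. lra.
Qed.

Lemma mass_le_of_product (eps M W1 W2 WQ WP : R) : 0 < eps -> 0 <= W1 -> 0 <= W2 ->
  0 <= WQ -> sqrt W1 * sqrt W2 = 1 / (4 * eps) -> eps * WQ <= M ->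
  WP <= 6 * WQ * (1 + eps ^ 2 * W1 * W2) -> WP <= 28 * M * (sqrt W1 * sqrt W2).
Proof.
  intros Heps HW1 HW2 HWQ Hprod HQ HP.
  assert (Hprod2 : eps ^ 2 * W1 * W2 = 1 / 16).
  { replace (eps ^ 2 * W1 * W2) with ((eps * (sqrt W1 * sqrt W2)) ^ 2)
      by (rewrite !Rpow_mult_distr, !pow2_sqrt by assumption; ring).
    rewrite Hprod. field. lra. }
  rewrite Hprod2 in HP. rewrite Hprod.
  replace (28 * M * (1 / (4 * eps))) with (7 * (M / eps)) by (field; lra).
  assert (WQ <= M / eps).
  { apply Rmult_le_reg_l with eps; [exact Heps|].
    replace (eps * (M / eps)) with M by (field; lra). exact HQ. }
  lra.
Qed.

Lemma ratio_bounds (M W1 W2 WP : R) : 0 <= M -> 0 <= W1 -> 0 <= W2 ->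
  0 < sqrt W1 * sqrt W2 -> WP <= 28 * M * (sqrt W1 * sqrt W2) ->
  W2 <= 2 * WP + 2 * (M ^ 2 * W1) -> M ^ 2 * W1 <= 2 * WP + 2 * W2 ->
  1 / 100 / M < sqrt W1 / sqrt W2 /\ sqrt W1 / sqrt W2 < 100 / M.
Proof.
  intros HM HW1 HW2 Hpos HWP H2 H1.
  rewrite <- (pow2_sqrt W1 HW1), <- (pow2_sqrt W2 HW2) in H1, H2.
  pose proof (sqrt_pos W1). pose proof (sqrt_pos W2).
  set (P1 := sqrt W1) in *. set (P2 := sqrt W2) in *.
  assert (HP1 : 0 < P1) by nra. assert (HP2 : 0 < P2) by nra.
  set (y := M * P1 / P2).
  assert (Hy : y * P2 = M * P1) by (unfold y; field; lra).
  assert (Hlo : 1 <= 56 * y + 2 * y ^ 2).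
  { apply Rmult_le_reg_r with (P2 ^ 2); [nra|].
    replace ((56 * y + 2 * y ^ 2) * P2 ^ 2) with (56 * (M * P1) * P2 + 2 * (M * P1) ^ 2)
      by (rewrite <- Hy; ring).
    nra. }
  assert (Hhi : y ^ 2 <= 56 * y + 2).
  { apply Rmult_le_reg_r with (P2 ^ 2); [nra|].
    replace (y ^ 2 * P2 ^ 2) with ((M * P1) ^ 2) by (rewrite <- Hy; ring).
    replace ((56 * y + 2) * P2 ^ 2) with (56 * (M * P1) * P2 + 2 * P2 ^ 2) by (rewrite <- Hy; ring).
    nra. }
  assert (Hy0 : 0 <= y)
    by (unfold y; apply Rmult_le_pos; [nra|apply Rlt_le, Rinv_0_lt_compat, HP2]).
  assert (HMpos : 0 < M).
  { destruct HM as [HM|HM]; [exact HM|]. unfold y in Hlo. rewrite <- HM in Hlo. nra. }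
  replace (P1 / P2) with (y / M) by (unfold y; field; lra).
  split; apply Rmult_lt_compat_r; try (apply Rinv_0_lt_compat; lra); nra.
Qed.

Theorem theorem6p7 (V : Z -> M2) (delta E : R) :
  admissible_pot V -> 0 < delta -> in_T V delta E ->
  forall u1 u2 : Z -> C * C,
    is_solution V (RtoC E) u1 -> fst (u1 1%Z) = RtoC 1 -> fst (u1 0%Z) = RtoC 0 ->
    is_solution V (RtoC E) u2 -> fst (u2 1%Z) = RtoC 0 -> fst (u2 0%Z) = RtoC 1 ->
  exists C1 C2 : R, 0 < C1 /\ C1 < C2 /\
    forall eps : R, 0 < eps < delta ->
    forall m : C, is_mplus V (E, eps) m ->
    forall L : R, 1 < L -> normL u1 L * normL u2 L = 1 / (4 * eps) ->
      C1 / Cmod m < normL u1 L / normL u2 L /\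
      normL u1 L / normL u2 L < C2 / Cmod m.
Proof.
  intros [_ HV] Hdelta HT u1 u2 Hu1 Hu11 Hu10 Hu2 Hu21 Hu20.
  pose proof (in_T_sub_m22_neq0 V delta E Hdelta HT) as HE.
  exists (1 / 100), 100. split; [lra|split; [lra|]].
  intros eps [Heps Heps_delta] m Hm L HL Hprod. rewrite !normL_trunc_sum in *.
  destruct (weyl_normalized V HV E eps m Heps Hm) as [psi [Hpsi [Hl2 [Hpsi0 Hpsi1]]]].
  assert (Hsmall : forall n, eps <= Rabs (E - Re (m22 (V n))))
    by (intros n; specialize (HT n); lra).
  assert (HL0 : 0 <= L) by lra.
  assert (Hnn : forall u, 0 <= trunc_sum L (sqnorm_at u))
    by (intros; apply trunc_sum_nonneg; [exact HL0|intros; apply sqnorm_nonneg]).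
  apply ratio_bounds with (WP := trunc_sum L (sqnorm_at (lincomb u1 u2 m))); auto using Cmod_ge_0.
  - rewrite Hprod. apply Rdiv_lt_0_compat; lra.
  - apply (mass_le_of_product eps _ _ _ (trunc_sum L (sqnorm_at psi))); auto.
    + eapply weyl_mass_le_Cmod; eauto; lra.
    + eapply trunc_sum_lincomb_le; eauto; lra.
  - now apply trunc_sum_snd_le.
  - now apply trunc_sum_fst_le.
Qed.
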